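(* Let $n,m$ be positive integers, $\mathbf{A}_c\in\mathbb{Q}^{m\times 2n}$, $\mathbf b_c\in\mathbb{Q}^m$, and let $c[\bar x,\bar x']$ be the linear constraint $\mathbf{A}_c\langle\mathbf x,\mathbf x'\rangle\ge\mathbf b_c$, assumed satisfiable over $\mathbb{Q}^{2n}$. Consider the binary $\mathrm{CLP}(\mathbb{Q})$ clause $C$: $p(\bar x)\mathrel{:-}c[\bar x,\bar x'],\,p(\bar x')$ with $p$ an $n$-ary predicate. For $\tilde{\boldsymbol\mu}=\langle\mu_0,\boldsymbol\mu\rangle\in\mathbb{Q}^{n+1}$ with $\boldsymbol\mu=\langle\mu_1,\dots,\mu_n\rangle$, define $$\mathrm{lrf}(C)=\Bigl\{\tilde{\boldsymbol\mu}\in\mathbb{Q}^{n+1}\;\Bigm|\;\forall\bar x,\bar x'\in\mathbb{Q}^n:\ c[\bar x,\bar x']\implies \sum_{i=1}^n\mu_ix_i-\sum_{i=1}^n\mu_ix'_i\ge1\ \wedge\ \mu_0+\sum_{i=1}^n\mu_ix_i\ge0\Bigr\}.$$ Let $\tilde{\mathbf A}_c\in\mathbb{Q}^{(m+2)\times(2n+1)}$ be the matrix with rows $(1,\mathbf 0)$, $(-1,\mathbf 0)$ followed by the block $(\mathbf 0\ \ \mathbf A_c)$ (so it encodes the extra constraint $x_0=1$ on an extra first variable $x_0$), and $\tilde{\mathbf b}_c=\langle 1,-1,\mathbf b_c\rangle\in\mathbb{Q}^{m+2}$. Let $\mathrm{ms}(C)$ be the set of all $\tilde{\boldsymbol\mu}=\langle\mu_0,\boldsymbol\mu\rangle\in\mathbb{Q}^{n+1}$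 for which there exist $\mathbf y\in\mathbb{Q}^m$ and $\mathbf z\in\mathbb{Q}^{m+2}$ with $$\mathbf y\ge\mathbf 0,\quad \mathbf A_c^{\mathrm T}\mathbf y=\langle\boldsymbol\mu,-\boldsymbol\mu\rangle,\quad \mathbf b_c^{\mathrm T}\mathbf y\ge1,$$ $$\mathbf z\ge\mathbf 0,\quad \tilde{\mathbf A}_c^{\mathrm T}\mathbf z=\langle\tilde{\boldsymbol\mu},\mathbf 0\rangle\ (\mathbf 0\in\mathbb{Q}^n),\quad \tilde{\mathbf b}_c^{\mathrm T}\mathbf z\ge0.$$ Then $\mathrm{lrf}(C)=\mathrm{ms}(C)$.
   Context: $\langle\mathbf v,\mathbf w\rangle$ denotes concatenation of column vectors; vector (in)equalities are componentwise; $\mathbf x=\langle x_1,\dots,x_n\rangle$, $\mathbf x'=\langle x'_1,\dots,x'_n\rangle$, and the constraint $c[\bar x,\bar x']$ is identified with $\mathbf A_c\langle\mathbf x,\mathbf x'\rangle\ge\mathbf b_c$. *)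

From mathcomp Require Import all_boot all_order all_algebra.
Set Implicit Arguments. Unset Strict Implicit. Unset Printing Implicit Defensive.
Import Order.TTheory GRing.Theory Num.Theory.
Local Open Scope ring_scope.

Definition cvle (k : nat) (u v : 'cV[rat]_k) : Prop := forall i, u i 0 <= v i 0.

Definition constr (n m : nat) (A : 'M[rat]_(m, n + n)) (b : 'cV[rat]_m)
  (x x' : 'cV[rat]_n) : Prop := cvle b (A *m col_mx x x').

Definition mu0_of (n : nat) (mut : 'cV[rat]_(1 + n)) : rat := (usubmx mut) 0 0.
Definition mu_of (n : nat) (mut : 'cV[rat]_(1 + n)) : 'cV[rat]_n := dsubmx mut.

Definition lrf (n m : nat) (A : 'M[rat]_(m, n + n)) (b : 'cV[rat]_m)
  (mut : 'cV[rat]_(1 + n)) : Prop :=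
  forall x x' : 'cV[rat]_n, constr A b x x' ->
    (\sum_(i < n) mu_of mut i 0 * x i 0) - (\sum_(i < n) mu_of mut i 0 * x' i 0) >= 1
    /\ mu0_of mut + \sum_(i < n) mu_of mut i 0 * x i 0 >= 0.

Definition Atil (n m : nat) (A : 'M[rat]_(m, n + n)) : 'M[rat]_(2 + m, 1 + (n + n)) :=
  block_mx (col_mx (1 : 'M[rat]_1) (- 1 : 'M[rat]_1)) 0 0 A.
Definition btil (m : nat) (b : 'cV[rat]_m) : 'cV[rat]_(2 + m) :=
  col_mx (col_mx (1 : 'M[rat]_1) (- 1 : 'M[rat]_1)) b.

Definition ms (n m : nat) (A : 'M[rat]_(m, n + n)) (b : 'cV[rat]_m)
  (mut : 'cV[rat]_(1 + n)) : Prop :=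
  exists (y : 'cV[rat]_m) (z : 'cV[rat]_(2 + m)),
    [/\ cvle 0 y, A^T *m y = col_mx (mu_of mut) (- mu_of mut) & (b^T *m y) 0 0 >= 1]
    /\ [/\ cvle 0 z, (Atil A)^T *m z = col_mx mut (0 : 'cV[rat]_n) &
        ((btil b)^T *m z) 0 0 >= 0].

(* Both conditions defining lrf(C) are affine inequalities that must hold on the
   polyhedron c.  Since c is satisfiable, the affine Farkas lemma says that such an
   inequality is implied by c iff it is a nonnegative combination of the rows of
   A_c, weakened by a constant.  For the decrease condition this is the y-part of
   ms(C).  For the bound condition the constant mu0 is absorbed by the extra variable
   x0 = 1, whose two rows x0 >= 1 and -x0 >= -1 receive multipliers differing by mu0.
   The Farkas lemma is proved by Fourier-Motzkin elimination: eliminating a variable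
   from an infeasible system gives an infeasible system of nonnegative row
   combinations, and a system without variables is infeasible only through a row
   0 >= b_i with b_i > 0. *)

From mathcomp Require Import all_boot all_order all_algebra.
From mathcomp Require Import ring lra.
Set Implicit Arguments. Unset Strict Implicit. Unset Printing Implicit Defensive.
Import Order.TTheory GRing.Theory Num.Theory.
Local Open Scope ring_scope.

Lemma exchange_weighted_sum (I J : finType) (c : I -> rat) (g : I -> J -> rat)
    (h : J -> rat) :
  \sum_j (\sum_i c i * g i j) * h j = \sum_i c i * \sum_j g i j * h j.
Proof.
under eq_bigr do rewrite mulr_suml.
rewrite exchange_big; apply: eq_bigr => i _; rewrite mulr_sumr.
by apply: eq_bigr => j _; rewrite mulrA.
Qed.

Lemma sum_pick_mul (I : finType) (p : I) (c : rat) (f : I -> rat) :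
  \sum_i (if i == p then c else 0) * f i = c * f p.
Proof. by rewrite (bigD1 p) //= eqxx big1 ?addr0 // => i /negbTE ->; rewrite mul0r. Qed.

Lemma exists_between (I : finType) (P N : pred I) (L U : I -> rat) :
    (forall p q, P p -> N q -> L p <= U q) ->
  exists x, (forall p, P p -> L p <= x) /\ (forall q, N q -> x <= U q).
Proof.
move=> LU; case: (pickP P) => [p0 Pp0|noP]; last first.
  exists (\big[Num.min/0]_(q | N q) U q); split=> [p|q Nq]; first by rewrite noP.
  by rewrite (bigD1 q) //= ge_min lexx.
exists (\big[Num.max/L p0]_(p | P p) L p); split=> [p Pp|q Nq].
  by rewrite (bigD1 p) //= le_max lexx.
apply: (big_ind (fun v => v <= U q)); first exact: LU.
  by move=> u v hu hv; rewrite ge_max hu hv.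
by move=> p Pp; exact: LU.
Qed.

Definition feasible (I : finType) (k : nat) (a : I -> 'I_k -> rat) (b : I -> rat) :=
  exists x : 'I_k -> rat, forall i, b i <= \sum_j a i j * x j.

Definition prepend (k : nat) (t : rat) (f : 'I_k -> rat) : 'I_k.+1 -> rat :=
  fun j => if unlift ord0 j is Some j' then f j' else t.

Lemma prepend0 (k : nat) (t : rat) (f : 'I_k -> rat) : prepend t f ord0 = t.
Proof. by rewrite /prepend unlift_none. Qed.

Lemma prependS (k : nat) (t : rat) (f : 'I_k -> rat) j : prepend t f (lift ord0 j) = f j.
Proof. by rewrite /prepend liftK. Qed.

Lemma sum_prepend (k : nat) (t : rat) (f : 'I_k -> rat) (X : 'I_k.+1 -> rat) :
  \sum_j prepend t f j * X j = t * X ord0 + \sum_j f j * X (lift ord0 j).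
Proof.
by rewrite big_ord_recl prepend0; under eq_bigr do rewrite prependS.
Qed.

Section FourierMotzkinStep.

Variables (I : finType) (k : nat) (a : I -> 'I_k.+1 -> rat) (b : I -> rat).

(* Nonnegative row combinations in which the first variable cancels: one for each
   pair of rows with coefficients of opposite signs, and the rows where it is absent. *)
Definition fm_weight (r : (I * I + I)%type) (i : I) : rat :=
  match r with
  | inl (p, q) =>
      if (0 < a p ord0) && (a q ord0 < 0) then
        (if i == p then - a q ord0 else 0) + (if i == q then a p ord0 else 0)
      else 0
  | inr p => if a p ord0 == 0 then (if i == p then 1 else 0) else 0
  end.

Definition fm_matrix r j := \sum_i fm_weight r i * a i (lift ord0 j).
Definition fm_rhs r := \sum_i fm_weight r i * b i.

Lemma fm_weight_ge0 r i : 0 <= fm_weight r i.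
Proof.
case: r => [[p q]|p] /=; last by case: ifP => // _; case: ifP.
case: ifP => // /andP[ap aq]; apply: addr_ge0; case: ifP => // _.
  by rewrite oppr_ge0 ltW.
exact: ltW.
Qed.

Lemma fm_weight_eliminates r : \sum_i fm_weight r i * a i ord0 = 0.
Proof.
case: r => [[p q]|p] /=.
  case: (_ && _); last by rewrite big1 // => i _; rewrite mul0r.
  under eq_bigr do rewrite mulrDl.
  by rewrite big_split /= !sum_pick_mul mulNr mulrC addNr.
case: (a p ord0 =P 0) => [ap0|_]; last by rewrite big1 // => i _; rewrite mul0r.
by rewrite sum_pick_mul ap0 mulr0.
Qed.

Lemma feasible_fm_lift : feasible fm_matrix fm_rhs -> feasible a b.
Proof.
move=> [x hx].
pose r i := \sum_j a i (lift ord0 j) * x j.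
have hr s : \sum_i fm_weight s i * b i <= \sum_i fm_weight s i * r i.
  by have := hx s; rewrite /fm_rhs /fm_matrix exchange_weighted_sum.
(* The eliminated system says exactly that every lower bound [L p] on the first
   variable (from a row with positive coefficient) is below every upper bound [U q]. *)
pose L p := (b p - r p) / a p ord0.
pose U q := (r q - b q) / - a q ord0.
have [x0 [hL hU]] : exists x0, (forall p, 0 < a p ord0 -> L p <= x0)
                             /\ (forall q, a q ord0 < 0 -> x0 <= U q).
  apply: exists_between => p q ap aq.
  have := hr (inl (p, q)); rewrite /= ap aq /=.
  under eq_bigr do rewrite mulrDl; under [X in _ <= X]eq_bigr do rewrite mulrDl.
  rewrite !big_split /= !sum_pick_mul => h.
  have aq' : 0 < - a q ord0 by rewrite oppr_gt0.
  rewrite /L /U ler_pdivlMr // mulrAC ler_pdivrMr //; lra.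
exists (prepend x0 x) => i; rewrite big_ord_recl prepend0.
under eq_bigr do rewrite prependS; rewrite -/(r i).
case: (ltgtP (a i ord0) 0) => ai.
- by have := hU i ai; rewrite /U ler_pdivlMr ?oppr_gt0 //; lra.
- by have := hL i ai; rewrite /L ler_pdivrMr //; lra.
- by have := hr (inr i); rewrite /= ai eqxx !sum_pick_mul !mul1r; lra.
Qed.

End FourierMotzkinStep.

Lemma fourier_motzkin (k : nat) (I : finType) (a : I -> 'I_k -> rat) (b : I -> rat) :
    ~ feasible a b ->
  exists y : I -> rat, [/\ forall i, 0 <= y i, forall j, \sum_i y i * a i j = 0
                         & 0 < \sum_i y i * b i].
Proof.
elim: k I a b => [|k IHk] I a b infeas.
  have [i bi|b_le0] := pickP (fun i => 0 < b i); last first.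
    by case: infeas; exists (fun _ => 0) => i; rewrite big_ord0 leNgt b_le0.
  exists (fun i' => if i' == i then 1 else 0); split; last by rewrite sum_pick_mul mul1r.
    by move=> i'; case: ifP.
  by case.
have [y [y_ge0 y_col y_rhs]] := IHk _ _ _ (contra_not (@feasible_fm_lift _ _ a b) infeas).
exists (fun i => \sum_r y r * fm_weight a r i); split.
- by move=> i; apply: sumr_ge0 => r _; rewrite mulr_ge0 ?fm_weight_ge0.
- move=> j; rewrite exchange_weighted_sum.
  have [j' ->|->] := unliftP ord0 j; first exact: y_col.
  by rewrite big1 // => r _; rewrite fm_weight_eliminates mulr0.
- by rewrite exchange_weighted_sum.
Qed.

Lemma sum_mul_combination (k : nat) (f g h : 'I_k -> rat) (s : rat) :
  \sum_j f j * (g j + s * h j) = \sum_j f j * g j + s * \sum_j f j * h j.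
Proof. by rewrite mulr_sumr -big_split; apply: eq_bigr => j _ /=; ring. Qed.

Lemma sum_mul_divr (I : finType) (f g : I -> rat) (t : rat) :
  \sum_i f i * (g i / t) = (\sum_i f i * g i) / t.
Proof. by rewrite mulr_suml; apply: eq_bigr => i _; rewrite mulrA. Qed.

Section AffineFarkas.

Variables (I : finType) (k : nat) (a : I -> 'I_k -> rat) (b : I -> rat).
Variables (c : 'I_k -> rat) (d : rat).
Hypothesis feas : feasible a b.
Hypothesis implied :
  forall x, (forall i, b i <= \sum_j a i j * x j) -> d <= \sum_j c j * x j.

Lemma implied_recession x :
  (forall i, 0 <= \sum_j a i j * x j) -> 0 <= \sum_j c j * x j.
Proof.
move=> ax_ge0; have [x0 hx0] := feas; have d_le := implied hx0.
rewrite leNgt; apply/negP => cx_lt0.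
set C := \sum_j c j * x j in cx_lt0.
pose s := (\sum_j c j * x0 j - d + 1) / - C.
have s_ge0 : 0 <= s by rewrite divr_ge0 ?oppr_ge0 ?ltW //; lra.
have sC : s * C = - (\sum_j c j * x0 j - d + 1).
  by rewrite /s invrN mulrN mulNr divfK ?lt_eqF.
have : d <= \sum_j c j * (x0 j + s * x j).
  apply: implied => i; rewrite sum_mul_combination.
  by have := hx0 i; have := mulr_ge0 s_ge0 (ax_ge0 i); lra.
by rewrite sum_mul_combination -/C sC; lra.
Qed.

Lemma implied_homogeneous t x : 0 <= t ->
  (forall i, b i * t <= \sum_j a i j * x j) -> d * t <= \sum_j c j * x j.
Proof.
rewrite le0r => /predU1P[-> ax|t_gt0 ax].
  by rewrite mulr0; apply: implied_recession => i; have := ax i; rewrite mulr0.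
have := implied (x := fun j => x j / t); rewrite sum_mul_divr ler_pdivlMr //.
by apply=> i; rewrite sum_mul_divr ler_pdivlMr.
Qed.

(* Homogenization in the extra variable t = x ord0: the rows encode
   [b t <= a x], [0 <= t] and [1 <= d t - c x]. *)
Definition homog_matrix (r : I + bool) : 'I_k.+1 -> rat :=
  match r with
  | inl i => prepend (- b i) (a i)
  | inr true => prepend 1 (fun _ => 0)
  | inr false => prepend d (fun j => - c j)
  end.

Definition homog_rhs (r : I + bool) : rat := if r is inr false then 1 else 0.

Lemma homog_infeasible : ~ feasible homog_matrix homog_rhs.
Proof.
move=> [X hX]; pose x j := X (lift ord0 j).
have := hX (inr false); have := hX (inr true); rewrite /= !sum_prepend.
rewrite big1 => [|j _]; last by rewrite mul0r.
under eq_bigr do rewrite mulNr; rewrite sumrN -/x => t_ge0 cx_le.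
have : d * X ord0 <= \sum_j c j * x j.
  apply: implied_homogeneous => [|i]; first lra.
  by have := hX (inl i); rewrite /= sum_prepend; lra.
lra.
Qed.

Lemma affine_farkas : exists y : I -> rat,
  [/\ forall i, 0 <= y i, forall j, \sum_i y i * a i j = c j & d <= \sum_i y i * b i].
Proof.
have [y [y_ge0 y_col y_rhs]] := fourier_motzkin homog_infeasible.
have split_sum (F : I + bool -> rat) :
    \sum_r F r = \sum_i F (inl i) + F (inr true) + F (inr false).
  by rewrite big_sumType big_bool /= addrA.
move: y_rhs; rewrite split_sum big1 => [|i _]; last by rewrite mulr0.
rewrite /= mulr0 mulr1 !add0r => y0_gt0.
have sum_div (f : I -> rat) :
    \sum_i y (inl i) / y (inr false) * f i = (\sum_i y (inl i) * f i) / y (inr false).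
  by rewrite mulr_suml; apply: eq_bigr => i _; rewrite mulrAC.
exists (fun i => y (inl i) / y (inr false)); split.
- by move=> i; rewrite divr_ge0 // ltW.
- move=> j; have := y_col (lift ord0 j); rewrite split_sum /= !prependS.
  under eq_bigr do rewrite prependS.
  by rewrite sum_div mulr0 addr0 => h; apply: (canLR (mulfK (lt0r_neq0 y0_gt0))); lra.
- have := y_col ord0; rewrite split_sum /= !prepend0.
  under eq_bigr do rewrite prepend0 mulrN.
  rewrite sumrN sum_div ler_pdivlMr // => h.
  by have := y_ge0 (inr true); lra.
Qed.

End AffineFarkas.

Lemma mx_dot (k : nat) (u v : 'cV[rat]_k) : (u^T *m v) 0 0 = \sum_i u i 0 * v i 0.
Proof. by rewrite mxE; apply: eq_bigr => i _; rewrite mxE. Qed.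

Lemma cvle_mulmx (m k : nat) (A : 'M[rat]_(m, k)) (b : 'cV_m) (x : 'cV_k) :
  cvle b (A *m x) <-> forall i, b i 0 <= \sum_j A i j * x j 0.
Proof. by split=> h i; have := h i; rewrite mxE. Qed.

Lemma weak_duality (m k : nat) (A : 'M[rat]_(m, k)) (b y : 'cV_m) (x : 'cV_k) :
  cvle 0 y -> cvle b (A *m x) -> (b^T *m y) 0 0 <= ((A^T *m y)^T *m x) 0 0.
Proof.
move=> y_ge0 Ax_ge; rewrite trmx_mul trmxK -mulmxA !mx_dot.
apply: ler_sum => i _; rewrite mulrC ler_wpM2l ?Ax_ge //.
by have := y_ge0 i; rewrite mxE.
Qed.

Lemma affine_farkas_mx (m k : nat) (A : 'M[rat]_(m, k)) (b : 'cV_m) (c : 'cV_k)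
    (d : rat) :
    (exists x, cvle b (A *m x)) ->
  (forall x, cvle b (A *m x) -> d <= (c^T *m x) 0 0) <->
  exists y, [/\ cvle 0 y, A^T *m y = c & d <= (b^T *m y) 0 0].
Proof.
move=> [x0 Ax0]; split=> [implied|[y [y_ge0 Ay d_le]] x Ax]; last first.
  by apply: le_trans d_le _; rewrite -Ay; exact: weak_duality.
have [|x Ax|y [y_ge0 y_col d_le]] :=
    @affine_farkas _ _ (fun i j => A i j) (fun i => b i 0) (fun j => c j 0) d.
- by exists (fun j => x0 j 0); apply/cvle_mulmx.
- have := implied (\col_j x j); rewrite mx_dot.
  under [\sum_j _]eq_bigr do rewrite mxE; apply; apply/cvle_mulmx => i.
  by under eq_bigr do rewrite mxE; exact: Ax.
exists (\col_i y i); split.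
- by move=> i; rewrite !mxE.
- apply/matrixP => j l; rewrite ord1 -y_col mxE.
  by apply: eq_bigr => i _; rewrite !mxE mulrC.
- by rewrite mx_dot; under eq_bigr do rewrite mxE mulrC.
Qed.

Lemma dot_col_mx (n : nat) (p q x x' : 'cV[rat]_n) :
  ((col_mx p q)^T *m col_mx x x') 0 0 = (p^T *m x) 0 0 + (q^T *m x') 0 0.
Proof. by rewrite tr_col_mx mul_row_col mxE. Qed.

Lemma lrf_implications (n m : nat) (A : 'M[rat]_(m, n + n)) (b : 'cV[rat]_m)
    (mut : 'cV[rat]_(1 + n)) :
  lrf A b mut <->
  (forall v, cvle b (A *m v) -> 1 <= ((col_mx (mu_of mut) (- mu_of mut))^T *m v) 0 0)
  /\ (forall v, cvle b (A *m v) -> - mu0_of mut <= ((col_mx (mu_of mut) 0)^T *m v) 0 0).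
Proof.
have dotN (x x' : 'cV_n) : ((col_mx (mu_of mut) (- mu_of mut))^T *m col_mx x x') 0 0
    = ((mu_of mut)^T *m x) 0 0 - ((mu_of mut)^T *m x') 0 0.
  by rewrite dot_col_mx linearN /= mulNmx !mxE.
have dot0 (x x' : 'cV_n) :
    ((col_mx (mu_of mut) 0)^T *m col_mx x x') 0 0 = ((mu_of mut)^T *m x) 0 0.
  by rewrite dot_col_mx trmx0 mul0mx [X in _ + X]mxE addr0.
rewrite /lrf; split=> [lrf_mut|[dec bnd] x x' cx]; last first.
  by have := dec _ cx; have := bnd _ cx; rewrite dotN dot0 !mx_dot; split; lra.
split=> v; rewrite -[v]vsubmxK => cv; have [] := lrf_mut _ _ cv.
  by rewrite dotN !mx_dot.
by rewrite dot0 mx_dot; lra.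
Qed.

Lemma col_mx1A (n : nat) (u : 'cV[rat]_1) (p q : 'cV[rat]_n) :
  col_mx u (col_mx p q) = col_mx (col_mx u p) q :> 'cV_(1 + (n + n)).
Proof.
rewrite col_mxA; apply/matrixP => i j; rewrite castmxE /=.
by congr (col_mx _ _ _ _); apply: val_inj.
Qed.

Lemma Atil_mul (n m : nat) (A : 'M[rat]_(m, n + n)) (z12 : 'cV[rat]_(1 + 1))
    (w : 'cV_m) :
  (Atil A)^T *m col_mx z12 w = col_mx (usubmx z12 - dsubmx z12) (A^T *m w).
Proof.
rewrite /Atil tr_block_mx mul_block_col !trmx0 !mul0mx addr0 add0r.
congr col_mx; rewrite (tr_col_mx (1 : 'M[rat]_1) (-1)) -[z12 in LHS]vsubmxK.
rewrite (mul_row_col (1^T : 'M[rat]_1) (- 1 : 'M[rat]_1)^T) trmx1 mul1mx.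
by congr (_ + _); apply/matrixP => i j; rewrite !ord1 !mxE big_ord1 !mxE mulN1r.
Qed.

Lemma btil_mul (m : nat) (b : 'cV[rat]_m) (z12 : 'cV[rat]_(1 + 1)) (w : 'cV_m) :
  ((btil b)^T *m col_mx z12 w) 0 0
  = usubmx z12 0 0 - dsubmx z12 0 0 + (b^T *m w) 0 0.
Proof.
rewrite /btil (tr_col_mx (col_mx (1 : 'M[rat]_1) (-1)) b) mul_row_col.
rewrite (tr_col_mx (1 : 'M[rat]_1) (-1)) -[z12 in LHS]vsubmxK.
rewrite (mul_row_col (1^T : 'M[rat]_1) (- 1 : 'M[rat]_1)^T) trmx1 mul1mx.
rewrite [in LHS]mxE [X in X + _ = _]mxE.
by congr (_ + _ + _); rewrite !mxE big_ord1 !mxE mulN1r.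
Qed.

Lemma Atil_certificateP (n m : nat) (A : 'M[rat]_(m, n + n)) (b : 'cV[rat]_m)
    (mut : 'cV[rat]_(1 + n)) :
  (exists z, [/\ cvle 0 z, (Atil A)^T *m z = col_mx mut (0 : 'cV[rat]_n)
                & 0 <= ((btil b)^T *m z) 0 0])
  <-> exists w, [/\ cvle 0 w, A^T *m w = col_mx (mu_of mut) 0
                  & - mu0_of mut <= (b^T *m w) 0 0].
Proof.
have mutE : col_mx mut 0 = col_mx (usubmx mut) (col_mx (mu_of mut) 0)
    :> 'cV_(1 + (n + n)).
  by rewrite col_mx1A vsubmxK.
split=> [[z [z_ge0 Az bz]]|[w [w_ge0 Aw bw]]].
  move: z_ge0 Az bz; rewrite -[z]vsubmxK Atil_mul btil_mul mutE.
  move=> z_ge0 /eq_col_mx[z12E Aw] bz; exists (dsubmx z); split=> //.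
    by move=> i; have := z_ge0 (rshift 2 i); rewrite col_mxEd !mxE.
  set z12 : 'cV_(1 + 1) := usubmx z in z12E bz *.
  suff -> : mu0_of mut = usubmx z12 0 0 - dsubmx z12 0 0 by lra.
  by rewrite /mu0_of -z12E !mxE.
set mu0 := mu0_of mut in bw *.
pose z12 : 'cV_(1 + 1) := col_mx (const_mx `|mu0|) (const_mx (`|mu0| - mu0)).
exists (col_mx z12 w); split.
- move=> i; rewrite !mxE; case: split => [i12|i']; last by have := w_ge0 i'; rewrite !mxE.
  by rewrite !mxE; case: split => j; rewrite !mxE ?normr_ge0 // subr_ge0 ler_norm.
- rewrite Atil_mul col_mxKu col_mxKd Aw mutE; congr col_mx.
  apply/matrixP => i j; rewrite !ord1 !mxE /=.
  by rewrite /mu0 /mu0_of mxE; ring.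
- have cst (a : rat) : (const_mx a : 'cV_1) 0 0 = a by rewrite mxE.
  by rewrite btil_mul col_mxKu col_mxKd !cst; lra.
Qed.

Theorem theorem2 (n m : nat) (hn : (0 < n)%N) (hm : (0 < m)%N)
  (A : 'M[rat]_(m, n + n)) (b : 'cV[rat]_m)
  (hsat : exists x x' : 'cV[rat]_n, constr A b x x') :
  forall mut : 'cV[rat]_(1 + n), lrf A b mut <-> ms A b mut.
Proof.
move=> mut; have [x [x' sat]] := hsat.
have feas : exists v, cvle b (A *m v) by exists (col_mx x x').
rewrite lrf_implications !(affine_farkas_mx _ _ feas) -Atil_certificateP.
split=> [[[y hy] [z hz]]|[y [z [hy hz]]]]; first by exists y, z.
by split; [exists y | exists z].
Qed.
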